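(* Let $\vec f=(f_1,\dots,f_n)$ be a profile of acknowledgement-based protocols. The following are equivalent: (i) $\vec f$ is an equilibrium; (ii) for every player $i\in[n]$ and every protocol $g_i\in\mathcal G_i^{\vec f}$, $C_i^{(\vec f_{-i},g_i)}(h_0)=\min_{f_i'}C_i^{(\vec f_{-i},f_i')}(h_0)=C_i^{\vec f}(h_0)$, where the minimum is over all protocols $f_i'$ of player $i$.
   Context: Contention game: $n$ players, channels $K=\{1,\dots,k\}$, slots $t=1,2,\dots$; each player has one packet, initially pending; in each slot a pending player chooses (possibly randomly) an action in $A=\{0,1,\dots,k\}$ ($0$ = idle, $a$ = transmit on channel $a$); a lone transmitter on a channel succeeds and leaves, colliding transmitters remain pending. $X_{i,t}$ is player $i$'s action at slot $t$, $h_{i,t}=(X_{i,1},\dots,X_{i,t})$ her personal history. Acknowledgement-based protocols: decision rules (distributions on $A$ at each slot) depend only on $h_{i,t-1}$; only transmitting players learn whether they succeeded. $T_i$ is player $i$'s latency; $C_i^{\vec f}(h_0)=\mathbb E[T_i\mid\vec f]$ is her unconditional expected latency under profile $\vec f$, and $(\vec f_{-i},g_i)$ denotes the profile with $f_i$ replaced by $g_i$. $\vec f$ is an equilibrium if for every $i$, slot $t$ and history, player $i$ cannot decrease her conditional expected latency by unilaterally deviating after $t$. For $\tau^*\ge1$ and a history $h_{i,\tau^*}=(a_{i,1},\dots,a_{i,\tau^*})$, $g_i(h_{i,\tau^*})$ is the protocol that plays $a_{i,t}$ with probability $1$ at each slot $1\le t\le\tau^*$ and follows $f_{i,t}$ for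 $t>\tau^*$. A history $h_{i,\tau^*}$ is consistent with $\vec f$ if it occurs with positive probability for player $i$ under $\vec f$; $\mathcal G_i^{\vec f}$ is the set of all protocols $g_i(h_{i,\tau^*})$, over all $\tau^*\ge1$, with $h_{i,\tau^*}$ consistent with $\vec f$. *)

From HB Require Import structures.
From mathcomp Require Import all_boot all_order all_algebra.
From mathcomp Require Import all_classical all_reals all_analysis.
Set Implicit Arguments. Unset Strict Implicit. Unset Printing Implicit Defensive.
Import Order.TTheory GRing.Theory Num.Theory.
Local Open Scope ring_scope.

(* Contention game with n players and k channels; actions A = {0,...,k}
   are encoded as 'I_k.+1 (0 = idle, a = transmit on channel a). *)
Section Contention.
Variables (R : realType) (n k : nat).

Definition action := 'I_k.+1.
Definition idle : action := ord0.

(* A (acknowledgement-based) protocol: the decision rule at slot t (t >= 1)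
   given the personal history h_{i,t-1} (a sequence of t-1 actions) is a
   distribution on A. *)
Definition protocol := nat -> seq action -> {ffun action -> R}.

Definition is_dist (d : {ffun action -> R}) :=
  (forall a, 0 <= d a) /\ \sum_a d a = 1.

Definition valid_protocol (g : protocol) := forall t h, is_dist (g t h).

Definition profile := 'I_n -> protocol.

Definition valid_profile (f : profile) := forall i, valid_protocol (f i).

Definition upd (f : profile) (i : 'I_n) (g : protocol) : profile :=
  fun j => if j == i then g else f j.

(* joint action profile in one slot; players that have left play idle *)
Definition slot_prof := {ffun 'I_n -> action}.
Definition prof0 : slot_prof := [ffun => idle].

Definition succ (x : slot_prof) (i : 'I_n) : bool :=
  (x i != idle) && [forall j, (j != i) ==> (x j != x i)].

Definition pendingb (tr : seq slot_prof) (i : 'I_n) : bool :=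
  all (fun x => ~~ succ x i) tr.

Definition phist (tr : seq slot_prof) (i : 'I_n) : seq action :=
  map (fun x : slot_prof => x i) tr.

(* probability weight of a trajectory (slots 1..size tr) under profile f:
   pending players sample independently from their decision rules, players
   who have left idle deterministically *)
Definition weight (f : profile) (tr : seq slot_prof) : R :=
  \prod_(s < size tr) \prod_(j : 'I_n)
    (if pendingb (take s tr) j
     then f j s.+1 (phist (take s tr) j) (nth prof0 tr s j)
     else ((nth prof0 tr s j == idle)%:R)).

Definition probm (f : profile) (m : nat) (E : seq slot_prof -> bool) : R :=
  \sum_(tr : m.-tuple slot_prof | E tr) weight f tr.

(* event "player i is pending at the start of slot t = size h and her
   actions in slots 1..t are h" (for h = [::] it is the sure event) *)
Definition Hev (i : 'I_n) (h : seq action) (tr : seq slot_prof) : bool :=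
  pendingb (take (size h).-1 tr) i && (phist (take (size h) tr) i == h).

Local Open Scope ereal_scope.

(* C_i^f(h_0) = E[T_i] = sum_{s >= 0} P(T_i > s), in [0, +oo] *)
Definition cost (f : profile) (i : 'I_n) : \bar R :=
  \sum_(s <oo) (probm f s (fun tr => pendingb tr i))%:E.

(* conditional expected latency of player i given history h of length t:
   E[T_i 1_H] / P(H) *)
Definition condcost (f : profile) (i : 'I_n) (h : seq action) : \bar R :=
  (\sum_(s <oo)
     (probm f (maxn s (size h))
        (fun tr => pendingb (take s tr) i && Hev i h (take (size h) tr)))%:E)
  * ((probm f (size h) (Hev i h))^-1)%:E.

Local Close Scope ereal_scope.

Definition equilibrium (f : profile) : Prop :=
  forall (i : 'I_n) (t : nat) (h : seq action), size h = t ->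
    0 < probm f t (Hev i h) ->
    forall g : protocol, valid_protocol g ->
      (forall s, (s <= t)%N -> g s = f i s) ->
      (condcost f i h <= condcost (upd f i g) i h)%E.

Definition point (a : action) : {ffun action -> R} := [ffun b => (b == a)%:R].

Definition gdev (f : profile) (i : 'I_n) (h : seq action) : protocol :=
  fun t hist => if (1 <= t <= size h)%N then point (nth idle h t.-1)
                else f i t hist.

Definition consistent (f : profile) (i : 'I_n) (h : seq action) : Prop :=
  (1 <= size h)%N /\ 0 < probm f (size h) (Hev i h).

Definition in_G (f : profile) (i : 'I_n) (g : protocol) : Prop :=
  exists h, consistent f i h /\ g = gdev f i h.

Definition mincost (f : profile) (i : 'I_n) : \bar R :=
  ereal_inf [set cost (upd f i g) i | g in [set g | valid_protocol g]].

End Contention.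

(* Among the protocols of player i that are forced through a history h of
   positive probability, her unconditional latency and her conditional latency
   given h rank the continuations in the same order: the first size h slots do
   not depend on the continuation, and conditioning on h only rescales the
   rest by 1/P(h).  So the equilibrium condition after h says exactly that
   following f_i is optimal, for the unconditional cost, among the protocols
   forced through h; (ii) => (i) follows since g_i(h) is such a protocol and
   attains the minimum.  For (i) => (ii), the cost of following f_i after h is
   the f_i-average, over the next action b, of the costs of also being forced
   to play b; all of these are at least that cost, so every b of positive
   weight attains it, and induction along a consistent history gives
   C(g_i(h)) = C(f). *)

From Pilot Require Import Defs.
From HB Require Import structures.
From mathcomp Require Import all_boot all_order all_algebra.
From mathcomp Require Import all_classical all_reals all_analysis.
From mathcomp Require Import lra.
Set Implicit Arguments. Unset Strict Implicit. Unset Printing Implicit Defensive.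
Import Order.TTheory GRing.Theory Num.Theory.
Local Open Scope ring_scope.

Section Contention.
Variables (R : realType) (n k : nat).
Local Notation profile := (profile R n k).
Local Notation protocol := (protocol R k).
Local Notation slot := (slot_prof n k).
Local Notation act := (action k).
Local Notation idl := (idle k).
Local Notation p0 := (prof0 n k).
Implicit Types (f F G : profile) (g : protocol) (tr : seq slot) (h : seq act).
Implicit Types (i j : 'I_n).

Definition weight_factor F tr (s : nat) (j : 'I_n) : R :=
  if pendingb (take s tr) j
  then F j s.+1 (phist (take s tr) j) (nth p0 tr s j)
  else ((nth p0 tr s j == idl)%:R).

Lemma weightE F tr :
  weight F tr = \prod_(s < size tr) \prod_j weight_factor F tr s j.
Proof. by []. Qed.

Lemma weight_factor_ge0 F tr s j : valid_profile F -> 0 <= weight_factor F tr s j.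
Proof. by move=> hF; rewrite /weight_factor; case: ifP => _ //; apply: (hF _ _ _).1. Qed.

Lemma weight_ge0 F tr : valid_profile F -> 0 <= weight F tr.
Proof.
move=> hF; rewrite weightE; apply: prodr_ge0 => s _; apply: prodr_ge0 => j _.
exact: weight_factor_ge0.
Qed.

Lemma probm_ge0 F m (E : seq slot -> bool) : valid_profile F -> 0 <= probm F m E.
Proof. by move=> hF; apply: sumr_ge0 => tr _; apply: weight_ge0. Qed.

Lemma weight_factor_neq0 F tr s j :
  weight F tr != 0 -> (s < size tr)%N -> weight_factor F tr s j != 0.
Proof.
rewrite weightE => /prodf_neq0 hw hs.
by have /prodf_neq0 := hw (Ordinal hs) isT; apply.
Qed.

Lemma weight_factor_take F tr m s j :
  (s < m)%N -> weight_factor F (take m tr) s j = weight_factor F tr s j.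
Proof. by move=> hs; rewrite /weight_factor take_takel ?(ltnW hs) // nth_take. Qed.

Lemma weight_take_neq0 F tr m : weight F tr != 0 -> weight F (take m tr) != 0.
Proof.
move=> hw; rewrite weightE; apply/prodf_neq0 => s _; apply/prodf_neq0 => j _.
have /andP[hsm hstr] : (s < m)%N && (s < size tr)%N.
  by rewrite -leq_min -size_take_min ltn_ord.
by rewrite weight_factor_take //; apply: weight_factor_neq0.
Qed.

Lemma eq_weight F G tr :
  (forall j s, (0 < s <= size tr)%N -> F j s = G j s) -> weight F tr = weight G tr.
Proof.
move=> hFG; rewrite !weightE; apply: eq_bigr => s _; apply: eq_bigr => j _.
by rewrite /weight_factor hFG // ltn_ord.
Qed.

Lemma eq_probm F G m (E : seq slot -> bool) :
  (forall j s, (0 < s <= m)%N -> F j s = G j s) -> probm F m E = probm G m E.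
Proof.
move=> hFG; apply: eq_bigr => tr _; apply: eq_weight => j s.
by rewrite size_tuple; apply: hFG.
Qed.

Lemma eq_probm_event F m (E1 E2 : seq slot -> bool) :
  (forall tr : m.-tuple slot, weight F tr != 0 -> E1 tr = E2 tr) ->
  probm F m E1 = probm F m E2.
Proof.
move=> hE; rewrite /probm [LHS]big_mkcond [RHS]big_mkcond; apply: eq_bigr => tr _.
have [->|/hE->//] := eqVneq (weight F tr) 0.
by rewrite !if_same.
Qed.

Lemma probm_proportional F G c m (E : seq slot -> bool) :
  (forall tr : m.-tuple slot, E tr -> weight F tr = c * weight G tr) ->
  probm F m E = c * probm G m E.
Proof. by move=> hFG; rewrite /probm mulr_sumr; apply: eq_bigr => tr /hFG. Qed.

Lemma probm_gt0 F m (E : seq slot -> bool) tr : valid_profile F ->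
  size tr = m -> E tr -> 0 < weight F tr -> 0 < probm F m E.
Proof.
move=> hF /eqP htr hE hw; rewrite /probm (bigD1 (Tuple htr)) //=.
by rewrite ltr_wpDr // sumr_ge0 // => ? _; apply: weight_ge0.
Qed.

Lemma probm_gt0_support F m (E : seq slot -> bool) :
  0 < probm F m E -> exists tr : m.-tuple slot, E tr /\ weight F tr != 0.
Proof.
case: (pickP (fun tr : m.-tuple slot => E tr && (weight F tr != 0))).
  by move=> tr /andP[? ?] _; exists tr.
move=> hnone; rewrite /probm big1 ?ltxx // => tr hE.
by have := hnone tr; rewrite hE => /negbFE/eqP.
Qed.

Lemma point_dist (a : act) : is_dist (Defs.point R a).
Proof.
split=> [b|]; first by rewrite ffunE ler0n.
rewrite (bigD1 a) //= ffunE eqxx big1 ?addr0 // => b /negbTE hb.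
by rewrite ffunE hb.
Qed.

Definition force h g : protocol := fun t hist =>
  if (1 <= t <= size h)%N then Defs.point R (nth idl h t.-1) else g t hist.

Definition set_slot g (t : nat) (b : act) : protocol := fun s hist =>
  if s == t then Defs.point R b else g s hist.

Lemma gdevE f i h : gdev f i h = force h (f i).
Proof. by []. Qed.

Lemma force_valid h g : valid_protocol g -> valid_protocol (force h g).
Proof. by move=> hg t hist; rewrite /force; case: ifP => _ //; apply: point_dist. Qed.

Lemma set_slot_valid g t b : valid_protocol g -> valid_protocol (set_slot g t b).
Proof. by move=> hg s hist; rewrite /set_slot; case: ifP => _ //; apply: point_dist. Qed.

Lemma upd_valid f i g :
  valid_profile f -> valid_protocol g -> valid_profile (upd f i g).
Proof. by move=> hf hg j; rewrite /upd; case: ifP. Qed.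

Lemma upd_force_valid f i h g :
  valid_profile f -> valid_protocol g -> valid_profile (upd f i (force h g)).
Proof. by move=> hf hg; apply: upd_valid => //; apply: force_valid. Qed.

Lemma upd_id f i : upd f i (f i) = f.
Proof. by apply: funext => j; rewrite /upd; case: eqP => [->|]. Qed.

Lemma force_nil g : force [::] g = g.
Proof. by apply: funext => -[]. Qed.

Lemma force_set_slot h g m : (m < size h)%N ->
  force (take m h) (set_slot g m.+1 (nth idl h m)) = force (take m.+1 h) g.
Proof.
move=> hm; apply: funext => -[|t]; apply: funext => hist //.
rewrite /force /set_slot !size_takel ?(ltnW hm) //=.
case: (ltngtP t m) => ht.
- by rewrite ltnS (ltnW ht) (nth_take _ ht) (nth_take _ (leqW ht)).
- by rewrite eqSS gtn_eqF // ltnNge ht.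
- by rewrite ht eqxx ltnSn nth_take.
Qed.

Lemma force_agree f i h g1 g2 j s : (0 < s <= size h)%N ->
  upd f i (force h g1) j s = upd f i (force h g2) j s.
Proof. by move=> hs; rewrite /upd /force; case: ifP => // _; rewrite hs. Qed.

Lemma pendingb_take tr m j : pendingb tr j -> pendingb (take m tr) j.
Proof. by rewrite -{1}(cat_take_drop m tr) /pendingb all_cat => /andP[]. Qed.

Lemma pendingb_take_le tr m m' j :
  (m <= m')%N -> pendingb (take m' tr) j -> pendingb (take m tr) j.
Proof. by move=> hm /(pendingb_take m); rewrite take_takel. Qed.

Lemma force_action f i h g tr r :
  weight_factor (upd f i (force h g)) tr r i != 0 -> (r < size h)%N ->
  pendingb (take r tr) i -> nth p0 tr r i = nth idl h r.
Proof.
move=> + hr hp; rewrite /weight_factor hp /upd eqxx /force /= hr ffunE.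
by case: (nth p0 tr r i =P nth idl h r) => // _; rewrite eqxx.
Qed.

Lemma phist_force f i h g tr : (size h <= size tr)%N ->
  (forall r, (r < size h)%N -> weight_factor (upd f i (force h g)) tr r i != 0) ->
  pendingb (take (size h).-1 tr) i -> phist (take (size h) tr) i = h.
Proof.
move=> hle hw hp; apply: (@eq_from_nth _ idl); first by rewrite size_map size_takel.
rewrite size_map size_takel // => r hr.
rewrite (nth_map p0) ?size_takel // nth_take //.
apply: (force_action (hw r hr) hr); apply: pendingb_take_le hp.
by rewrite -ltnS prednK // (leq_ltn_trans _ hr).
Qed.

Lemma Hev_force f i h g tr : (size h <= size tr)%N ->
  weight (upd f i (force h g)) tr != 0 -> pendingb tr i ->
  Hev i h (take (size h) tr).
Proof.
move=> hle hw hp; rewrite /Hev !take_takel ?leq_pred // pendingb_take //=.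
apply/eqP/phist_force => //; last exact: pendingb_take.
by move=> r hr; apply: weight_factor_neq0 hw (leq_trans hr hle).
Qed.

Definition hist_prob g h : R :=
  \prod_(r < size h) g r.+1 (take r h) (nth idl h r).

Lemma eq_hist_prob g g' h :
  (forall s, (s <= size h)%N -> g s = g' s) -> hist_prob g h = hist_prob g' h.
Proof. by move=> hg; apply: eq_bigr => r _; rewrite hg. Qed.

Lemma weight_force f i g h tr : (size h <= size tr)%N ->
  Hev i h (take (size h) tr) ->
  weight (upd f i g) tr = hist_prob g h * weight (upd f i (force h g)) tr.
Proof.
move=> hle /andP[hp /eqP hh]; rewrite take_takel ?leq_pred // in hp.
rewrite take_takel // in hh.
have slotE (s : 'I_(size tr)) : \prod_j weight_factor (upd f i g) tr s j =
    (if (s < size h)%N then g s.+1 (take s h) (nth idl h s) else 1) *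
    \prod_j weight_factor (upd f i (force h g)) tr s j.
  rewrite (bigD1 i) //= [in RHS](bigD1 i) //= mulrA; congr (_ * _); last first.
    by apply: eq_bigr => j /negbTE hj; rewrite /weight_factor /upd hj.
  rewrite /weight_factor /upd eqxx /force.
  case: (ltnP s (size h)) => hs /=; last by rewrite mul1r.
  have -> : pendingb (take s tr) i.
    by apply: pendingb_take_le hp; rewrite -ltnS prednK // (leq_ltn_trans _ hs).
  have -> : phist (take s tr) i = take s h.
    by rewrite -hh /phist -map_take take_takel // ltnW.
  have -> : nth p0 tr s i = nth idl h s.
    by rewrite -[in RHS]hh (nth_map p0) ?size_takel // nth_take.
  by rewrite ffunE eqxx mulr1.
rewrite !weightE (eq_bigr _ (fun s _ => slotE s)) big_split /=; congr (_ * _).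
rewrite /hist_prob (big_ord_widen _ (fun r => g r.+1 (take r h) (nth idl h r)) hle).
by rewrite [RHS]big_mkcond.
Qed.

Lemma probm_Hev_force f i g h :
  probm (upd f i g) (size h) (Hev i h) =
  hist_prob g h * probm (upd f i (force h g)) (size h) (Hev i h).
Proof.
apply: probm_proportional => tr hev; apply: weight_force; first by rewrite size_tuple.
by rewrite take_oversize // size_tuple.
Qed.

Lemma probm_Hev_force_gt0 f i g h : valid_profile f -> valid_protocol g ->
  0 < probm (upd f i g) (size h) (Hev i h) ->
  hist_prob g h != 0 /\ 0 < probm (upd f i (force h g)) (size h) (Hev i h).
Proof.
move=> hf hg; rewrite probm_Hev_force.
have := probm_ge0 (size h) (Hev i h) (upd_force_valid i h hf hg).
rewrite le0r => /orP[/eqP->|hP]; first by rewrite mulr0 ltxx.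
by rewrite pmulr_lgt0 // => hpi; rewrite gt_eqF.
Qed.

Lemma condcost_force f i g h :
  valid_profile f -> valid_protocol g -> hist_prob g h != 0 ->
  condcost (upd f i g) i h = condcost (upd f i (force h g)) i h.
Proof.
move=> hf hg hpi; rewrite /condcost probm_Hev_force.
have num s : probm (upd f i g) (maxn s (size h))
      (fun tr => pendingb (take s tr) i && Hev i h (take (size h) tr)) =
    hist_prob g h * probm (upd f i (force h g)) (maxn s (size h))
      (fun tr => pendingb (take s tr) i && Hev i h (take (size h) tr)).
  apply: probm_proportional => tr /andP[_ hev].
  by apply: weight_force; rewrite ?size_tuple ?leq_maxr.
under eq_eseriesr do rewrite num EFinM.
rewrite nneseriesZl => [|s _]; last first.
  by rewrite lee_fin; apply/probm_ge0/upd_force_valid.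
by rewrite invfM EFinM muleCA !muleA -EFinM mulVf // mul1e.
Qed.

Lemma nneseries_split_tail (u v : nat -> R) t : (forall s, 0 <= u s) ->
  (forall s, (t <= s)%N -> u s = v s) ->
  (\sum_(s <oo) (u s)%:E =
   (\sum_(0 <= s < t) u s)%:E + \sum_(t <= s <oo) (v s)%:E)%E.
Proof.
move=> hu huv; rewrite (nneseries_split 0 t) => [|s _]; last by rewrite lee_fin.
rewrite add0n sumEFin; congr (_ + _)%E.
by rewrite eseries_cond [RHS]eseries_cond; apply: eq_eseriesr => s /andP[_ /huv->].
Qed.

(* Up to slot [size h] both profiles play [h], and from then on a pending
   player has necessarily played [h]: the two costs differ only through the
   same tail series, which the conditional costs scale by [1 / P(h)]. *)
Lemma force_cost_leE f i h g1 g2 :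
  valid_profile f -> valid_protocol g1 -> valid_protocol g2 ->
  0 < probm (upd f i (force h g1)) (size h) (Hev i h) ->
  (cost (upd f i (force h g1)) i <= cost (upd f i (force h g2)) i)%E =
  (condcost (upd f i (force h g1)) i h <= condcost (upd f i (force h g2)) i h)%E.
Proof.
move=> hf hg1 hg2 hP.
pose F g := upd f i (force h g).
pose a g s := probm (F g) s (fun tr => pendingb tr i).
pose b g s := probm (F g) (maxn s (size h))
  (fun tr => pendingb (take s tr) i && Hev i h (take (size h) tr)).
have agree m (E : seq slot -> bool) :
    (m <= size h)%N -> probm (F g1) m E = probm (F g2) m E.
  move=> hm; apply: eq_probm => j s /andP[s0 sm].
  by apply: force_agree; rewrite s0 (leq_trans sm hm).
have cost_split g : valid_protocol g -> cost (F g) i =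
    ((\sum_(0 <= s < size h) a g s)%:E + \sum_(size h <= s <oo) (b g s)%:E)%E.
  move=> hg; apply: nneseries_split_tail => [s|s hs].
    exact: probm_ge0 (upd_force_valid i h hf hg).
  rewrite /a /b (maxn_idPl hs); apply: eq_probm_event => tr hw.
  rewrite take_oversize ?size_tuple //; case hp: (pendingb tr i) => //=.
  by rewrite (Hev_force _ hw hp) // size_tuple.
have condcost_split g : valid_protocol g -> condcost (F g) i h =
    (((\sum_(0 <= s < size h) b g s)%:E + \sum_(size h <= s <oo) (b g s)%:E) *
     ((probm (F g) (size h) (Hev i h))^-1)%:E)%E.
  move=> hg; rewrite /condcost.
  rewrite (nneseries_split_tail (u := b g) (v := b g) (t := size h)) => [//|s|//].
  exact: probm_ge0 (upd_force_valid i h hf hg).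
rewrite !cost_split // !condcost_split // -(agree _ _ (leqnn (size h))).
have -> : \sum_(0 <= s < size h) a g2 s = \sum_(0 <= s < size h) a g1 s.
  by apply: eq_big_nat => s /andP[_ /ltnW hs]; rewrite /a agree.
have -> : \sum_(0 <= s < size h) b g2 s = \sum_(0 <= s < size h) b g1 s.
  by apply: eq_big_nat => s /andP[_ /ltnW hs]; rewrite /b (maxn_idPr hs) agree.
by rewrite lee_pmul2r ?lte_fin ?invr_gt0 // !leeD2lE.
Qed.

Lemma deviation_cost_leE f i h g : valid_profile f -> valid_protocol g ->
  (forall s, (s <= size h)%N -> g s = f i s) -> 0 < probm f (size h) (Hev i h) ->
  (cost (upd f i (force h (f i))) i <= cost (upd f i (force h g)) i)%E =
  (condcost f i h <= condcost (upd f i g) i h)%E.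
Proof.
move=> hf hg hgf; rewrite -{1}(upd_id f i) => hP.
have [hpi hPf] := probm_Hev_force_gt0 hf (hf i) hP.
have -> : condcost f i h = condcost (upd f i (f i)) i h by rewrite upd_id.
have hpig : hist_prob g h != 0 by rewrite (eq_hist_prob hgf).
rewrite [condcost (upd f i (f i)) i h]condcost_force //.
by rewrite [condcost (upd f i g) i h]condcost_force // force_cost_leE.
Qed.

Lemma probm_Hev_nil F i : probm F 0 (Hev i [::]) = 1.
Proof.
rewrite /probm (eq_bigl (fun t => t == [tuple])) => [|t]; last first.
  by rewrite (tuple0 t) eqxx /Hev.
by rewrite big_pred1_eq weightE big_ord0.
Qed.

Lemma condcost_nil F i : condcost F i [::] = cost F i.
Proof.
rewrite /condcost /= probm_Hev_nil invr1 mule1.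
apply: eq_eseriesr => s _; congr EFin; rewrite maxn0.
apply: eq_bigl => tr; rewrite take_oversize ?size_tuple // /Hev !take0 /=.
by rewrite andbT.
Qed.

Lemma eq_cost F G i :
  (forall j s, (0 < s)%N -> F j s = G j s) -> cost F i = cost G i.
Proof.
move=> hFG; apply: eq_eseriesr => s _; congr EFin.
by apply: eq_probm => j t /andP[/hFG].
Qed.

Lemma cost_ge0 F i : valid_profile F -> (0 <= cost F i)%E.
Proof. by move=> hF; apply: nneseries_ge0 => s _ _; rewrite lee_fin probm_ge0. Qed.

Lemma mincost_le f i g : valid_protocol g -> (mincost f i <= cost (upd f i g) i)%E.
Proof. by move=> hg; apply: ereal_inf_lbound; exists g. Qed.

Lemma mincost_eq_cost f i : valid_profile f ->
  (forall g, valid_protocol g -> (cost f i <= cost (upd f i g) i)%E) ->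
  mincost f i = cost f i.
Proof.
move=> hf hle; apply/eqP; rewrite eq_le; apply/andP; split.
  by rewrite -{2}(upd_id f i); apply: mincost_le.
by apply/ereal_infP => _ [g hg <-]; apply: hle.
Qed.

Lemma weight_split_slot F tr (s0 : 'I_(size tr)) j0 :
  weight F tr = weight_factor F tr s0 j0 *
    ((\prod_(s < size tr | s != s0) \prod_j weight_factor F tr s j) *
     \prod_(j | j != j0) weight_factor F tr s0 j).
Proof.
rewrite weightE (bigD1 s0) //= (bigD1 j0) //=.
by rewrite mulrAC -mulrA mulrC -!mulrA; congr (_ * _); rewrite mulrC.
Qed.

Lemma set_slot_agree g t b s : s != t -> set_slot g t b s = g s.
Proof. by rewrite /set_slot => /negbTE->. Qed.

Section Mixing.
Variables (f : profile) (i : 'I_n) (g : protocol) (h : seq act).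
Hypotheses (hf : valid_profile f) (hg : valid_protocol g).
Local Notation Gh := (upd f i (force h g)).
Local Notation Gb b := (upd f i (force h (set_slot g (size h).+1 b))).

Lemma force_set_slot_agree b j s : s != size h -> Gh j s.+1 = Gb b j s.+1.
Proof.
move=> hs; rewrite /upd; case: ifP => // _.
by rewrite /force set_slot_agree // eqSS.
Qed.

Lemma weight_mix tr : weight Gh tr = \sum_b g (size h).+1 h b * weight (Gb b) tr.
Proof.
have sum1 : \sum_b g (size h).+1 h b = 1 by have [_ ->] := hg (size h).+1 h.
have [hle|hlt] := leqP (size tr) (size h).
  rewrite (eq_bigr (fun b => g (size h).+1 h b * weight Gh tr)) => [|b _].
    by rewrite -mulr_suml sum1 mul1r.
  congr (_ * _); apply: eq_weight => j [|s] // /andP[_ hs].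
  by rewrite -force_set_slot_agree // neq_ltn (leq_trans hs hle).
pose s0 : 'I_(size tr) := Ordinal hlt.
set Q := fun F => (\prod_(s < size tr | s != s0) \prod_j weight_factor F tr s j) *
                  \prod_(j | j != i) weight_factor F tr s0 j.
have QE b : Q (Gb b) = Q Gh.
  rewrite /Q; congr (_ * _).
    apply: eq_bigr => s hs; apply: eq_bigr => j _.
    by rewrite /weight_factor -(force_set_slot_agree b).
  by apply: eq_bigr => j /negbTE hj; rewrite /weight_factor /upd hj.
have wQ F : weight F tr = weight_factor F tr s0 i * Q F by exact: weight_split_slot.
rewrite wQ; under eq_bigr do rewrite wQ QE mulrA.
rewrite -mulr_suml; have [->|hQ] := eqVneq (Q Gh) 0; first by rewrite !mulr0.
congr (_ * _); rewrite /weight_factor /upd eqxx /force /= ltnn /=.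
case: ifP => hpend; last by rewrite -mulr_suml sum1 mul1r.
have -> : phist (take (size h) tr) i = h.
  apply: phist_force => [|r hr|]; first exact: ltnW.
    move: hQ; rewrite mulf_eq0 negb_or => /andP[/prodf_neq0 hne _].
    have hrs : Ordinal (ltn_trans hr hlt) != s0 by rewrite -val_eqE /= ltn_eqF.
    by have /prodf_neq0 := hne _ hrs; apply.
  exact: pendingb_take_le (leq_pred _) hpend.
under eq_bigr => b _ do rewrite /set_slot eqxx ffunE.
rewrite (bigD1 (nth p0 tr (size h) i)) //= eqxx mulr1 big1 ?addr0 // => b hb.
by rewrite eq_sym (negbTE hb) mulr0.
Qed.

Lemma cost_mix : cost Gh i = (\sum_b (g (size h).+1 h b)%:E * cost (Gb b) i)%E.
Proof.
have hGb b : valid_profile (Gb b).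
  by apply: upd_force_valid => //; apply: set_slot_valid.
have probm_mix s : (probm Gh s (fun tr => pendingb tr i))%:E =
    (\sum_b (g (size h).+1 h b)%:E * (probm (Gb b) s (fun tr => pendingb tr i))%:E)%E.
  rewrite sumEFin; congr EFin; rewrite /probm.
  under eq_bigr do rewrite weight_mix.
  by rewrite exchange_big; apply: eq_bigr => b _; rewrite mulr_sumr.
rewrite /cost; under eq_eseriesr do rewrite probm_mix.
rewrite nneseries_sum => [|b s _]; last first.
  by rewrite mule_ge0 // lee_fin ?probm_ge0 //; have [->] := hg (size h).+1 h.
by apply: eq_bigr => b _; rewrite nneseriesZl // => s _; rewrite lee_fin probm_ge0.
Qed.

End Mixing.

Lemma wavg_lbound_eq (I : finType) (p : I -> R) (x : I -> \bar R) (c : \bar R) a :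
  (forall b, 0 <= p b) -> \sum_b p b = 1 -> 0 < p a -> (0 <= c)%E ->
  (forall b, c <= x b)%E -> c = (\sum_b (p b)%:E * x b)%E -> x a = c.
Proof.
move=> hp hp1 hpa hc0 hc hsum; apply/eqP; rewrite eq_le hc andbT.
move: hc0 hc hsum; case: c => [r| |] // _ hc hsum; last by rewrite leey.
have hxa : ((p a)%:E * x a + ((1 - p a) * r)%:E <= r%:E)%E.
  rewrite [leRHS]hsum (bigD1 a) //=; apply: leeD2l.
  have -> : 1 - p a = \sum_(b | b != a) p b by rewrite -hp1 (bigD1 a) //= addrC addrK.
  rewrite mulr_suml -sumEFin; apply: lee_sum => b _; rewrite EFinM.
  by apply: lee_wpmul2l; rewrite ?lee_fin.
move: (hc a) hxa; case: (x a) => [y| |] // _.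
  rewrite -EFinM -EFinD !lee_fin => hy.
  by rewrite -(ler_pM2l hpa); move: hy; rewrite mulrBl mul1r; lra.
by rewrite muleC gt0_mulye ?lte_fin.
Qed.

Lemma Hev_prefix_gt0 f i h m : valid_profile f ->
  0 < probm f (size h) (Hev i h) -> (m < size h)%N ->
  0 < probm f m (Hev i (take m h)) /\ 0 < f i m.+1 (take m h) (nth idl h m).
Proof.
move=> hf hP hm.
have [tr [/andP[hp /eqP hh] hw]] := probm_gt0_support hP.
rewrite take_oversize ?size_tuple // in hh.
have htr : size tr = size h by rewrite size_tuple.
have hpm : pendingb (take m tr) i.
  by apply: pendingb_take_le hp; rewrite -ltnS prednK // (leq_ltn_trans _ hm).
have hphm : phist (take m tr) i = take m h.
  by rewrite /phist map_take -/(phist tr i) hh.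
split.
  apply: (@probm_gt0 _ _ _ (take m tr)) => //.
  - by rewrite size_takel // htr ltnW.
  - rewrite /Hev (size_takel (ltnW hm)) (take_takel _ (leq_pred m)).
    rewrite (take_takel _ (leqnn m)).
    by rewrite (pendingb_take_le (leq_pred m) hpm) hphm /=.
  - by rewrite lt0r weight_take_neq0 //= weight_ge0.
have := weight_factor_neq0 i hw (_ : (m < size tr)%N); rewrite htr => /(_ hm).
have hnth : nth p0 tr m i = nth idl h m by rewrite -[in RHS]hh (nth_map p0) // htr.
rewrite /weight_factor hpm hphm hnth => hne.
by rewrite lt0r hne; have [-> _] := hf i m.+1 (take m h).
Qed.

Lemma exists_consistent_action f i : valid_profile f ->
  exists a, 0 < probm f 1 (Hev i [:: a]).
Proof.
move=> hf.
have hx j : exists b, 0 < f j 1 [::] b.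
  have [hge hsum] := hf j 1 [::].
  case: (pickP (fun b => 0 < f j 1 [::] b)) => [b hb|hnone]; first by exists b.
  move: hsum; rewrite big1 => [/esym/eqP|b _]; first by rewrite oner_eq0.
  by apply/eqP; rewrite eq_le hge andbT leNgt hnone.
pose x : slot := [ffun j => xchoose (hx j)].
exists (x i); apply: (@probm_gt0 _ _ _ [:: x]) => //; first by rewrite /Hev /= eqxx.
rewrite weightE big_ord1; apply: prodr_gt0 => j _.
by rewrite /weight_factor /= ffunE; apply: (xchooseP (hx j)).
Qed.

Lemma equilibrium_mincost f i : valid_profile f -> equilibrium f ->
  mincost f i = cost f i.
Proof.
move=> hf heq; apply: mincost_eq_cost => // g hg.
(* Slot 0 is never played, but the equilibrium condition at t = 0 asks the
   deviation to agree with f_i there. *)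
pose g0 : protocol := fun s => if s is 0 then f i 0 else g s.
have hg0 : valid_protocol g0 by move=> [|s] hist; [apply: hf | apply: hg].
have -> : cost (upd f i g) i = cost (upd f i g0) i.
  by apply: eq_cost => j [|s] // _; rewrite /upd; case: ifP.
rewrite -!condcost_nil; apply: (heq i 0 [::]) => //; last by case.
by rewrite probm_Hev_nil ltr01.
Qed.

Lemma equilibrium_cost_force f i h : valid_profile f -> equilibrium f ->
  0 < probm f (size h) (Hev i h) -> cost (upd f i (force h (f i))) i = cost f i.
Proof.
move=> hf heq hP.
suff prefixE m : (m <= size h)%N ->
    cost (upd f i (force (take m h) (f i))) i = cost f i.
  by rewrite -{1}(take_size h) prefixE.
elim: m => [|m IH] hm; first by rewrite take0 force_nil upd_id.
have [hPm hpa] := Hev_prefix_gt0 hf hP hm.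
have hsz : size (take m h) = m by rewrite size_takel // ltnW.
rewrite -(force_set_slot _ hm) -(IH (ltnW hm)).
pose x b := cost (upd f i (force (take m h) (set_slot (f i) m.+1 b))) i.
apply: (@wavg_lbound_eq _ (f i m.+1 (take m h)) x) hpa _ _ _.
- by have [] := hf i m.+1 (take m h).
- by have [] := hf i m.+1 (take m h).
- exact: cost_ge0 (upd_force_valid _ _ hf (hf i)).
- move=> b; rewrite /x deviation_cost_leE ?hsz //.
  + apply: (heq i m) => //; first exact: set_slot_valid.
    by move=> s hs; rewrite set_slot_agree // neq_ltn ltnS hs.
  + exact: set_slot_valid.
  + by move=> s hs; rewrite set_slot_agree // neq_ltn ltnS hs.
- by rewrite /x; have := @cost_mix f i (f i) (take m h) hf (hf i); rewrite hsz.
Qed.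

Lemma equilibrium_of_force_mincost f : valid_profile f ->
  (forall i h, 0 < probm f (size h) (Hev i h) ->
     cost (upd f i (force h (f i))) i = mincost f i) ->
  equilibrium f.
Proof.
move=> hf hmin i _ h <- hP g hg hgf.
by rewrite -deviation_cost_leE // hmin //; apply/mincost_le/force_valid.
Qed.

End Contention.

Unset Implicit Arguments.

Theorem lemma1 (R : realType) (n k : nat) (hk : (0 < k)%N)
  (f : profile R n k) (hf : valid_profile f) :
  equilibrium f <->
  (forall (i : 'I_n) (g : protocol R k), in_G f i g ->
     cost (upd f i g) i = mincost f i /\ mincost f i = cost f i).
Proof.
split=> [heq i _ [h [[_ hP] ->]]|hG].
  by rewrite gdevE equilibrium_cost_force // equilibrium_mincost.
apply: equilibrium_of_force_mincost => // i [|a h] hP.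
  have [a ha] := exists_consistent_action i hf.
  have [_ ->] := hG i _ (ex_intro _ [:: a] (conj (conj isT ha) erefl)).
  by rewrite force_nil upd_id.
by have [<- _] := hG i _ (ex_intro _ (a :: h) (conj (conj isT hP) erefl)).
Qed.
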